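(* For the additive noise model with $N$ items and $K$ defectives, random Bernoulli$(1/K)$ design and maximum-likelihood decoding, in the regime $N,K\to\infty$ with $K=o(N)$, a number of tests $T=O\!\left(\frac{K\log N}{1-q}\right)$ is achievable (arbitrarily small average error probability), where $q\in[0,1)$ is the parameter of the Bernoulli noise.
   Context: Design: $N\times T$ binary matrix with i.i.d. Bernoulli$(1/K)$ entries, $X_j(t)=1$ iff item $j$ is in test $t$. Additive noise model: for defective set $S$ ($|S|=K$), $Y(t)=\left(\bigvee_{j\in S}X_j(t)\right)\vee W(t)$ where $W(1),\dots,W(T)$ are i.i.d. Bernoulli$(q)$, independent of the design. The ML decoder chooses a $K$-subset $S'$ maximizing $p(Y^T\mid\mathbf X_{S'})$. Average error probability is averaged over the design, the noise, and $S$ uniform among $K$-subsets. *)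

From HB Require Import structures.
From mathcomp Require Import all_boot all_order all_algebra.
From mathcomp Require Import all_classical all_reals all_analysis.
Set Implicit Arguments. Unset Strict Implicit. Unset Printing Implicit Defensive.
Import Order.TTheory GRing.Theory Num.Theory.
Local Open Scope ring_scope.

(* A test design: X j t = true iff item j is in test t. *)
Definition design (N T : nat) := {ffun 'I_N -> {ffun 'I_T -> bool}}.
Definition outcomes (T : nat) := {ffun 'I_T -> bool}.

Definition bern {R : realType} (p : R) (b : bool) : R := if b then p else 1 - p.

Definition design_prob {R : realType} (N K T : nat) (X : design N T) : R :=
  \prod_(j < N) \prod_(t < T) bern (K%:R^-1) (X j t).

Definition noise_prob {R : realType} (T : nat) (q : R) (W : outcomes T) : R :=
  \prod_(t < T) bern q (W t).

Definition orS (N T : nat) (X : design N T) (S : {set 'I_N}) (t : 'I_T) : bool :=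
  [exists j in S, X j t].

Definition outcome (N T : nat) (S : {set 'I_N}) (X : design N T) (W : outcomes T)
  : outcomes T := [ffun t => orS X S t || W t].

Definition lik {R : realType} (N T : nat) (q : R) (X : design N T)
  (S : {set 'I_N}) (Y : outcomes T) : R :=
  \prod_(t < T) (if orS X S t then (if Y t then 1 else 0) else bern q (Y t)).

Definition is_ML_decoder {R : realType} (N K T : nat) (q : R)
  (dec : design N T -> outcomes T -> {set 'I_N}) : Prop :=
  forall (X : design N T) (Y : outcomes T),
    #|dec X Y| = K /\
    forall S' : {set 'I_N}, #|S'| = K -> lik q X S' Y <= lik q X (dec X Y) Y.

Definition avg_error {R : realType} (N K T : nat) (q : R)
  (dec : design N T -> outcomes T -> {set 'I_N}) : R :=
  (#|[set S : {set 'I_N} | #|S| == K]|%:R)^-1 *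
  \sum_(S : {set 'I_N} | #|S| == K)
    \sum_(X : design N T) \sum_(W : outcomes T)
      design_prob K X * noise_prob q W *
      (if dec X (outcome S X W) != S then 1 else 0).

From HB Require Import structures.
From mathcomp Require Import all_boot all_order all_algebra.
From mathcomp Require Import all_classical all_reals all_analysis.
From mathcomp Require Import ring lra.
Import numFieldNormedType.Exports.
Import Order.TTheory GRing.Theory Num.Theory.
Local Open Scope ring_scope.
Set Implicit Arguments. Unset Strict Implicit. Unset Printing Implicit Defensive.

(* A non-defective item is ruled out by any negative test containing it, and an
   ML decoder never outputs a K-set containing a ruled-out item while the true
   set has positive likelihood; so the decoder can only err if some of the
   N - K non-defectives survives all T tests.  A single test eliminates a fixed
   non-defective with probability r = (1/K)(1 - 1/K)^K (1 - q) >= (1 - q)/(e^2 K),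
   independently across tests, so by the union bound the error probability is
   at most N (1 - r)^T <= N exp(-r T), which is at most e/N once
   T ~ 2 e^2 K ln N / (1 - q). *)

Section GroupTesting.
Variable R : realType.
Implicit Types (N K T : nat) (p q : R).

Lemma bern_ge0 p b : 0 <= p -> p <= 1 -> 0 <= bern p b.
Proof. by move=> p0 p1; case: b => //=; rewrite subr_ge0. Qed.

Lemma sum_bern p : \sum_b bern p b = 1.
Proof. by rewrite big_bool /= addrC subrK. Qed.

Lemma inv_nat_ge0 K : 0 <= K%:R^-1 :> R.
Proof. by rewrite invr_ge0. Qed.

Lemma inv_nat_le1 K : K%:R^-1 <= 1 :> R.
Proof. by case: K => [|k]; rewrite ?invr0 // invf_le1 // ler1n. Qed.

Lemma design_prob_ge0 N K T (X : design N T) : 0 <= design_prob K X :> R.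
Proof.
apply: prodr_ge0 => j _; apply: prodr_ge0 => t _.
exact: bern_ge0 (inv_nat_ge0 K) (inv_nat_le1 K).
Qed.

Lemma noise_prob_ge0 T q (W : outcomes T) :
  0 <= q -> q <= 1 -> 0 <= noise_prob q W.
Proof. by move=> q0 q1; apply: prodr_ge0 => t _; apply: bern_ge0. Qed.

Lemma avg_error_ge0 N K T q (dec : design N T -> outcomes T -> {set 'I_N}) :
  0 <= q -> q <= 1 -> 0 <= avg_error K q dec.
Proof.
move=> q0 q1; rewrite /avg_error mulr_ge0 ?invr_ge0 //.
apply: sumr_ge0 => S _; apply: sumr_ge0 => X _; apply: sumr_ge0 => W _.
by rewrite !mulr_ge0 ?design_prob_ge0 ?noise_prob_ge0 //; case: ifP.
Qed.

Definition eliminated N T (X : design N T) (Y : outcomes T) (j : 'I_N) : bool :=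
  [exists t, X j t && ~~ Y t].

Lemma lik_ge0 N T q (X : design N T) S Y :
  0 <= q -> q <= 1 -> 0 <= lik q X S Y.
Proof.
move=> q0 q1; apply: prodr_ge0 => t _.
by case: ifP => _; [case: ifP | exact: bern_ge0].
Qed.

Lemma lik_eliminated N T q (X : design N T) (S : {set 'I_N}) Y j :
  j \in S -> eliminated X Y j -> lik q X S Y = 0.
Proof.
move=> jS /existsP[t /andP[Xjt nYt]]; apply/eqP/prodf_eq0; exists t => //.
have -> : orS X S t by apply/existsP; exists j; rewrite jS.
by rewrite (negbTE nYt).
Qed.

Lemma lik_outcome_neq0 N T q (X : design N T) (S : {set 'I_N}) W :
  noise_prob q W != 0 -> lik q X S (outcome S X W) != 0.
Proof.
move=> nW; apply/prodf_neq0 => t _; rewrite ffunE.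
case: (orS X S t) => /=; first exact: oner_neq0.
by apply: contra nW => bW0; apply/prodf_eq0; exists t.
Qed.

Lemma ML_decoder_exact N K T q dec (S : {set 'I_N}) (X : design N T) W :
  0 <= q -> q <= 1 -> is_ML_decoder K q dec -> #|S| = K ->
  noise_prob q W != 0 ->
  (forall j, j \notin S -> eliminated X (outcome S X W) j) ->
  dec X (outcome S X W) = S.
Proof.
move=> q0 q1 ML cS nW elim_out; set Y := outcome S X W.
have [cD MLD] := ML X Y.
have likD : lik q X (dec X Y) Y != 0.
  rewrite gt_eqF // (lt_le_trans _ (MLD S cS)) // lt0r.
  by rewrite lik_outcome_neq0 ?lik_ge0.
apply/eqP; rewrite eqEcard cD cS leqnn andbT.
apply/fintype.subsetP => j jD; apply/negPn/negP => jS.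
by move/eqP: likD; apply; apply: lik_eliminated jD (elim_out j jS).
Qed.

Lemma ML_error_le_survivors N K T q dec (S : {set 'I_N}) (X : design N T) W :
  0 <= q -> q <= 1 -> is_ML_decoder K q dec -> #|S| = K ->
  design_prob K X * noise_prob q W * (if dec X (outcome S X W) != S then 1 else 0)
  <= \sum_(j | j \notin S)
       design_prob K X * noise_prob q W * (~~ eliminated X (outcome S X W) j)%:R.
Proof.
move=> q0 q1 ML cS; rewrite -mulr_sumr -!mulrA ler_wpM2l ?design_prob_ge0 //.
have [->|nW] := eqVneq (noise_prob q W) 0; first by rewrite !mul0r.
rewrite ler_wpM2l ?noise_prob_ge0 //.
have [allE|] := boolP [forall j, (j \notin S) ==> eliminated X (outcome S X W) j].
- rewrite (ML_decoder_exact q0 q1 ML cS nW) => [|j jS]; last first.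
    by move/forallP/(_ j): allE; rewrite jS.
  by rewrite eqxx; apply: sumr_ge0.
- rewrite negb_forall => /existsP[j]; rewrite negb_imply => /andP[jS nej].
  rewrite (bigD1 j) //= nej (le_trans (_ : _ <= 1)) //; first by case: ifP.
  by rewrite lerDl; apply: sumr_ge0.
Qed.

Lemma natr_forall (I : finType) (P : pred I) :
  [forall i, P i]%:R = \prod_i (P i)%:R :> R.
Proof.
have [/forallP allP|] := boolP [forall i, P i]; first by rewrite big1 // => i _; rewrite allP.
by rewrite negb_forall => /existsP[i nPi]; apply/esym/eqP/prodf_eq0; exists i; rewrite // (negbTE nPi).
Qed.

Lemma sum_prod_bern N p : \sum_(a : {ffun 'I_N -> bool}) \prod_i bern p (a i) = 1.
Proof. by rewrite -(bigA_distr_bigA (fun=> bern p)) big1 // => i _; rewrite sum_bern. Qed.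

Lemma prob_isolated N p (S : {set 'I_N}) j : j \notin S ->
  \sum_(a : {ffun 'I_N -> bool}) \prod_i bern p (a i) * (a j && ~~ [exists i in S, a i])%:R
  = p * (1 - p) ^+ #|S|.
Proof.
move=> jS.
pose isolates i b := if i == j then b else (i \in S) ==> ~~ b.
have isolatedE a : (a j && ~~ [exists i in S, a i]) = [forall i, isolates i (a i)].
  apply/andP/forallP => [[aj /existsPn naS] i|all_i]; rewrite /isolates.
    by case: eqP => [->//|_]; apply/implyP => iS; move: (naS i); rewrite iS.
  split; first by move: (all_i j); rewrite /isolates eqxx.
  apply/existsPn => i; apply/negP => /andP[iS ai]; move: (all_i i); rewrite /isolates iS ai.
  by case: eqP => // ij; move: jS; rewrite -ij iS.
under eq_bigr do rewrite isolatedE natr_forall -big_split /=.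
rewrite -(bigA_distr_bigA (fun i b => bern p b * (isolates i b)%:R)) /= (bigD1 j) //=.
rewrite big_bool /isolates eqxx /= mulr1 mulr0 addr0; congr (_ * _).
rewrite (eq_bigr (fun i => if i \in S then 1 - p else 1)) => [|i /negbTE ij]; last first.
  by rewrite big_bool /= ij; case: (i \in S); rewrite /= ?mulr1 ?mulr0 ?add0r // addrC subrK.
rewrite -big_mkcondr -prodr_const; apply: eq_bigl => i /=.
by case: eqP => [->|]; rewrite ?(negbTE jS).
Qed.

(* One test, with column [x.1] and noise bit [x.2], weighted by its probability
   and restricted to the event that it does not eliminate [j]. *)
Definition test_weight N p q (S : {set 'I_N}) j (x : {ffun 'I_N -> bool} * bool) : R :=
  \prod_i bern p (x.1 i) * bern q x.2 * (~~ [&& x.1 j, ~~ [exists i in S, x.1 i] & ~~ x.2])%:R.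

Lemma sum_test_weight N p q (S : {set 'I_N}) j : j \notin S ->
  \sum_x test_weight p q S j x = 1 - p * (1 - p) ^+ #|S| * (1 - q).
Proof.
move=> jS; transitivity (\sum_a \sum_w test_weight p q S j (a, w)).
  by rewrite pair_bigA; apply: eq_bigr => -[].
set P := fun a : {ffun 'I_N -> bool} => \prod_i bern p (a i).
set E := fun a : {ffun 'I_N -> bool} => a j && ~~ [exists i in S, a i].
have noise_sum a : \sum_w test_weight p q S j (a, w) = P a - (1 - q) * (P a * (E a)%:R).
  rewrite big_bool /test_weight /= !andbT !andbF -/(P a) -/(E a).
  by case: (E a) => /=; ring.
under eq_bigr do rewrite noise_sum.
by rewrite sumrB -mulr_sumr sum_prod_bern prob_isolated // mulrC.
Qed.

Definition split_tests N T (F : {ffun 'I_T -> {ffun 'I_N -> bool} * bool}) :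
    design N T * outcomes T :=
  ([ffun i => [ffun t => (F t).1 i]], [ffun t => (F t).2]).

Definition join_tests N T (XW : design N T * outcomes T) :
    {ffun 'I_T -> {ffun 'I_N -> bool} * bool} :=
  [ffun t => ([ffun i => XW.1 i t], XW.2 t)].

Lemma split_testsK N T : cancel (@split_tests N T) (@join_tests N T).
Proof.
move=> F; apply/ffunP => t; rewrite ffunE /=.
case Ft: (F t) => [a w]; congr (_, _); last by rewrite ffunE Ft.
by apply/ffunP => i; rewrite !ffunE Ft.
Qed.

Lemma join_testsK N T : cancel (@join_tests N T) (@split_tests N T).
Proof.
move=> [X W]; congr (_, _); first by apply/ffunP => i; apply/ffunP => t; rewrite !ffunE.
by apply/ffunP => t; rewrite !ffunE.
Qed.

Lemma sum_prod_tests N T (g : {ffun 'I_N -> bool} * bool -> R) :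
  \sum_(X : design N T) \sum_(W : outcomes T) \prod_t g ([ffun i => X i t], W t)
  = (\sum_x g x) ^+ T.
Proof.
rewrite pair_bigA /= (reindex (@split_tests N T)); last first.
  by apply: onW_bij; exists (@join_tests N T); [apply: split_testsK | apply: join_testsK].
rewrite -[in RHS](card_ord T) -prodr_const bigA_distr_bigA /=.
apply: eq_bigr => F _; apply: eq_bigr => t _; congr g.
case Ft: (F t) => [a w]; congr (_, _); last by rewrite ffunE Ft.
by apply/ffunP => i; rewrite !ffunE Ft.
Qed.

Lemma survival_prob N K T q (S : {set 'I_N}) j : j \notin S ->
  \sum_(X : design N T) \sum_(W : outcomes T)
    design_prob K X * noise_prob q W * (~~ eliminated X (outcome S X W) j)%:R
  = (1 - K%:R^-1 * (1 - K%:R^-1) ^+ #|S| * (1 - q)) ^+ T.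
Proof.
move=> jS; rewrite -(sum_test_weight _ _ jS) -sum_prod_tests.
apply: eq_bigr => X _; apply: eq_bigr => W _.
rewrite /design_prob /noise_prob /eliminated negb_exists natr_forall exchange_big /=.
rewrite -!big_split /=; apply: eq_bigr => t _.
rewrite /test_weight /= !ffunE /orS negb_or.
congr (_ * _ * _); first by apply: eq_bigr => i _; rewrite ffunE.
by congr (~~ [&& _, ~~ _ & _])%:R; apply: eq_existsb => i; rewrite ffunE.
Qed.

(* A test eliminates a fixed non-defective iff it contains it, misses all [K]
   defectives and is not flipped by the noise. *)
Definition elim_prob K q : R := K%:R^-1 * (1 - K%:R^-1) ^+ K * (1 - q).

Lemma elim_prob_le1 K q : 0 <= q -> q <= 1 -> elim_prob K q <= 1.
Proof.
move=> q0 q1; have p1 := inv_nat_le1 K; have p0 := inv_nat_ge0 K.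
rewrite !mulr_ile1 ?mulr_ge0 ?exprn_ge0 ?exprn_ile1 ?subr_ge0 //;
  by rewrite lerBlDr lerDl.
Qed.

Lemma ML_error_given_le N K T q dec (S : {set 'I_N}) :
  0 <= q -> q <= 1 -> is_ML_decoder K q dec -> #|S| = K ->
  \sum_(X : design N T) \sum_(W : outcomes T)
    design_prob K X * noise_prob q W * (if dec X (outcome S X W) != S then 1 else 0)
  <= N%:R * (1 - elim_prob K q) ^+ T.
Proof.
move=> q0 q1 ML cS.
apply: le_trans (_ : _ <= \sum_X \sum_W \sum_(j | j \notin S)
    design_prob K X * noise_prob q W * (~~ eliminated X (outcome S X W) j)%:R) _.
  by do 2 (apply: ler_sum => ? _); exact: ML_error_le_survivors.
under eq_bigr do rewrite exchange_big /=.
rewrite exchange_big (eq_bigr (fun=> (1 - elim_prob K q) ^+ T)) => [|j jS]; last first.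
  by rewrite survival_prob // cS.
rewrite sumr_const -[leLHS]mulr_natl ler_wpM2r ?exprn_ge0 ?subr_ge0 ?elim_prob_le1 //.
by rewrite ler_nat (leq_trans (max_card _)) ?card_ord.
Qed.

Lemma avg_error_le N K T q (dec : design N T -> outcomes T -> {set 'I_N}) :
  (K <= N)%N -> 0 <= q -> q <= 1 ->
  is_ML_decoder K q dec -> avg_error K q dec <= N%:R * (1 - elim_prob K q) ^+ T.
Proof.
move=> KN q0 q1 ML; rewrite /avg_error.
set A := [set S : {set 'I_N} | #|S| == K].
have cA0 : (#|A|%:R : R) != 0 by rewrite pnatr_eq0 card_draws card_ord -lt0n bin_gt0.
apply: le_trans (_ : _ <= #|A|%:R^-1 * \sum_(S in A) N%:R * (1 - elim_prob K q) ^+ T) _.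
  rewrite ler_wpM2l ?invr_ge0 // (eq_bigl (fun S => S \in A)) => [|S]; last by rewrite inE.
  by apply: ler_sum => S; rewrite inE => /eqP; exact: ML_error_given_le.
by rewrite sumr_const; set B := N%:R * _; rewrite -[B *+ _]mulr_natl mulrA mulVf // mul1r.
Qed.

Lemma ln_nat_ge0 n : 0 <= ln n%:R :> R.
Proof. by case: n => [|n]; [rewrite ln0 | rewrite ln_ge0 // ler1n]. Qed.

Lemma exprn_le_expR (r : R) n : r <= 1 -> (1 - r) ^+ n <= expR (- (r * n%:R)).
Proof.
move=> r1; rewrite -mulNr expRM_natr lerXn2r ?nnegrE ?subr_ge0 ?expR_ge0 //.
exact: expR_ge1Dx.
Qed.

Lemma expR_le_1B (x : R) : 0 <= x < 1 -> expR (- (x / (1 - x))) <= 1 - x.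
Proof.
move=> /andP[x0 x1]; have px : 0 < 1 - x by rewrite subr_gt0.
have inv1B : 1 + x / (1 - x) = (1 - x)^-1 by field; rewrite subr_eq0 eq_sym lt_eqF.
rewrite expRN -[leRHS]invrK lef_pV2 ?posrE ?expR_gt0 ?invr_gt0 //.
by apply: le_trans (expR_ge1Dx _); rewrite inv1B.
Qed.

Lemma expR_neg2_le_pow K : (2 <= K)%N -> expR (-2) <= (1 - K%:R^-1) ^+ K :> R.
Proof.
move=> K2; set x : R := K%:R^-1.
have K0 : 0 < K%:R :> R by rewrite ltr0n (leq_trans _ K2).
have x2 : x <= 2^-1.
  by rewrite /x lef_pV2 ?posrE ?ltr0n ?(leq_trans _ K2) // (ler_nat R 2).
have x1 : x < 1 by apply: le_lt_trans x2 _; rewrite invf_lt1 ?ltr1n.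
apply: le_trans (_ : expR (- (x / (1 - x))) ^+ K <= _); last first.
  by rewrite lerXn2r ?nnegrE ?expR_ge0 ?subr_ge0 ?(ltW x1) // expR_le_1B ?inv_nat_ge0.
rewrite -expRM_natr ler_expR mulNr lerN2.
have -> : x / (1 - x) * K%:R = (1 - x)^-1.
  rewrite /x; field; rewrite (gt_eqF K0) /= subr_eq0 pnatr_eq1 gtn_eqF //.
rewrite -[leLHS]mul1r ler_pdivrMr ?subr_gt0 //; lra.
Qed.

Lemma tests_bound N K q : 0 <= q -> q < 1 -> (2 <= K)%N -> (0 < N)%N ->
  N%:R * (1 - elim_prob K q) ^+ Num.truncn (2 * expR 2 * K%:R * ln N%:R / (1 - q))
  <= expR 1 / N%:R.
Proof.
move=> q0 q1 K2 N1; set L := ln (N%:R : R); set x := 2 * expR 2 * K%:R * L / (1 - q).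
have K0 : 0 < K%:R :> R by rewrite ltr0n (leq_trans _ K2).
have N0 : 0 < N%:R :> R by rewrite ltr0n.
have q1' : 0 < 1 - q by rewrite subr_gt0.
(* [r0] bounds [elim_prob K q] from below and is tuned so that [r0 * x = 2 L]. *)
set r0 := K%:R^-1 * expR (-2) * (1 - q).
have r0_le : r0 <= elim_prob K q.
  by rewrite ler_wpM2r ?subr_ge0 ?(ltW q1) // ler_wpM2l ?inv_nat_ge0 ?expR_neg2_le_pow.
have r0_ge0 : 0 <= r0 by rewrite !mulr_ge0 ?inv_nat_ge0 ?expR_ge0 ?(ltW q1').
have r0_le1 : r0 <= 1 by apply: le_trans r0_le (elim_prob_le1 _ q0 (ltW q1)).
have r0x : r0 * x = 2 * L.
  rewrite /r0 /x expRN; field.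
  by rewrite (gt_eqF K0) (gt_eqF q1') (gt_eqF (expR_gt0 _)).
have T_ge : x - 1 <= (Num.truncn x)%:R by rewrite lerBlDr natr1 ltW ?truncnS_gt.
have elim_T : 2 * L - 1 <= elim_prob K q * (Num.truncn x)%:R.
  apply: le_trans (_ : r0 * (Num.truncn x)%:R <= _); last by rewrite ler_wpM2r.
  apply: le_trans (_ : r0 * (x - 1) <= _); last by rewrite ler_wpM2l.
  by rewrite mulrBr r0x mulr1 lerB.
apply: le_trans (_ : N%:R * expR (1 - 2 * L) <= _).
  rewrite ler_wpM2l ?ler0n // (le_trans (exprn_le_expR _ _)) ?elim_prob_le1 ?(ltW q1) //.
  by rewrite ler_expR lerNl opprB.
rewrite expRD expRN -[2]/(2%:R) expRM_natl /L lnK ?posrE // mulrC -mulrA.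
by rewrite ler_wpM2l ?expR_ge0 // expr2 invfM -mulrA mulVf ?gt_eqF // mulr1.
Qed.
End GroupTesting.

Local Open Scope classical_set_scope.
Local Open Scope ring_scope.

Lemma near_infty_of_ge (P : nat -> Prop) :
  (exists n0, forall n, (n0 <= n)%N -> P n) -> \forall n \near \oo, P n.
Proof. by move=> [n0 P_ge]; exists n0. Qed.

Lemma cvg_div_nat_infty (R : realType) (c : R) (N : nat -> nat) :
  (forall M : nat, exists n0 : nat, forall n, (n0 <= n)%N -> (M <= N n)%N) ->
  (fun n => c / (N n)%:R) @ \oo --> 0.
Proof.
move=> N_infty; apply/cvgrPdist_lt => eps eps0; near=> n.
have N_ge : ((Num.truncn (`|c| / eps)).+1 <= N n)%N by near: n; exact: near_infty_of_ge.
have N0 : 0 < (N n)%:R :> R by rewrite ltr0n (leq_trans _ N_ge).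
rewrite sub0r normrN normrM normfV normr_nat ltr_pdivrMr // mulrC -ltr_pdivrMr //.
by apply: lt_le_trans (truncnS_gt _) _; rewrite ler_nat.
Unshelve. all: end_near.
Qed.

Theorem theorem7 (R : realType) :
  exists C : R, 0 < C /\
  forall (q : R), 0 <= q -> q < 1 ->
  forall (N K : nat -> nat),
    (forall M : nat, exists n0 : nat, forall n, (n0 <= n)%N -> (M <= N n)%N) ->
    (forall M : nat, exists n0 : nat, forall n, (n0 <= n)%N -> (M <= K n)%N) ->
    (fun n : nat => ((K n)%:R / (N n)%:R : R)) @ \oo --> 0%R ->
    exists T : nat -> nat,
      (forall n, (T n)%:R <= C * (K n)%:R * ln ((N n)%:R) / (1 - q)) /\
      forall dec : forall n, design (N n) (T n) -> outcomes (T n) -> {set 'I_(N n)},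
        (forall n, (K n <= N n)%N -> is_ML_decoder (K n) q (dec n)) ->
        (fun n : nat => avg_error (K n) q (dec n)) @ \oo --> 0%R.
Proof.
exists (2 * expR 2); split; first by rewrite mulr_gt0 ?expR_gt0.
move=> q q0 q1 N K N_infty K_infty KN0.
exists (fun n => Num.truncn (2 * expR 2 * (K n)%:R * ln (N n)%:R / (1 - q))); split.
  move=> n; rewrite truncn_le; apply: divr_ge0; last by rewrite subr_ge0 ltW.
  by rewrite !mulr_ge0 ?expR_ge0 ?ln_nat_ge0.
move=> dec ML; apply: (squeeze_cvgr (f := fun=> 0) (h := fun n => expR 1 / (N n)%:R)).
- near=> n.
  have K2 : (2 <= K n)%N by near: n; exact: near_infty_of_ge.
  have N0 : (0 < N n)%N by near: n; exact: near_infty_of_ge.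
  have KN : (K n <= N n)%N.
    have : `|(K n)%:R / (N n)%:R| < 1 :> R by near: n; exact: cvgr0_norm_lt.
    by rewrite ger0_norm // ltr_pdivrMr ?ltr0n // mul1r ltr_nat => /ltnW.
  rewrite avg_error_ge0 ?(ltW q1) //= (le_trans (avg_error_le KN q0 (ltW q1) (ML n KN))) //.
  exact: tests_bound.
- exact: cvg_cst.
- exact: cvg_div_nat_infty.
Unshelve. all: end_near.
Qed.
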